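(* Let $\mathcal A$ be a Scott continuous, naturally ordered, partial semiring. For any family $(f_i:X\to\mathcal W(Y))_{i\in I}$ of Scott continuous functions and any directed set $D\subseteq X$, \[\sup_{x\in D}\sum_{i\in I}f_i(x)=\sum_{i\in I}f_i(\sup D).\]
   Context: A partial semiring $\mathcal A=\langle U,+,\cdot,\mathbf 0,\mathbf 1\rangle$: $\langle U,+,\mathbf 0\rangle$ is a commutative monoid with $+$ possibly partial, $\langle U,\cdot,\mathbf 1\rangle$ a monoid with total $\cdot$, two-sided distributivity, $\mathbf 0$ annihilates. Natural order: $u\le v$ iff $u+w=v$ for some $w$; naturally ordered means this is a partial order. Scott continuous: for every directed $D\subseteq U$ and $y\in U$, $\sup_{x\in D}(x+y)=(\sup D)+y$, $\sup_{x\in D}(x\cdot y)=(\sup D)\cdot y$, $\sup_{x\in D}(y\cdot x)=y\cdot\sup D$. Standing assumption: $\mathcal A$ has a top element. $\sum_{i\in I}u_i$ is the supremum of all finite sums over finite subsets of $I$. $\mathcal W(Y)$ is the set of $m:Y\to U$ with countable support $\{y:m(y)\ne\mathbf 0\}$ and defined mass $\sum_{y\in\mathrm{supp}(m)}m(y)$; sums of weighting functions are pointwise, and $\mathcal W(Y)$ is ordered by $m_1\sqsubseteq m_2$ iff $m_1+m=m_2$ for some $m$. $X$ is a partially ordered set in which the suprema considered exist; a function is Scott continuous if it preserves suprema of directed sets. *)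

From Stdlib Require Import List.
Import ListNotations.
Set Implicit Arguments.

Section Order.
Variable A : Type.
Variable le : A -> A -> Prop.

Definition upper_bound (S : A -> Prop) (b : A) : Prop :=
  forall x, S x -> le x b.

Definition is_sup (S : A -> Prop) (s : A) : Prop :=
  upper_bound S s /\ forall b, upper_bound S b -> le s b.

Definition directed (S : A -> Prop) : Prop :=
  (exists x, S x) /\
  forall x y, S x -> S y -> exists z, S z /\ le x z /\ le y z.

Definition partial_order : Prop :=
  (forall x, le x x) /\
  (forall x y z, le x y -> le y z -> le x z) /\
  (forall x y, le x y -> le y x -> x = y).
End Order.

(** * Partial sums given by a (functional) addition relation
    [addR a b c] means "a + b is defined and equals c". *)
Section PSums.
Variable A : Type.
Variable addR : A -> A -> A -> Prop.
Variable zero : A.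

Inductive fsumR : list A -> A -> Prop :=
| fsumR_nil : fsumR [] zero
| fsumR_cons a l t r : fsumR l t -> addR a t r -> fsumR (a :: l) r.

Definition nat_le (u v : A) : Prop := exists w, addR u w v.

Definition is_family_sum (I : Type) (u : I -> A) (s : A) : Prop :=
  (forall l : list I, NoDup l -> exists t, fsumR (map u l) t) /\
  is_sup nat_le (fun t => exists l : list I, NoDup l /\ fsumR (map u l) t) s.
End PSums.

Definition obind {A B : Type} (o : option A) (f : A -> option B) : option B :=
  match o with Some a => f a | None => None end.

Section PSR.
Variable U : Type.
Variable add : U -> U -> option U.
Variable mul : U -> U -> U.
Variables zero one : U.

Definition addR (a b c : U) : Prop := add a b = Some c.

Record is_partial_semiring : Prop := {
  add_comm : forall a b, add a b = add b a;
  (* associativity of a partial operation: both sides defined or both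
     undefined, and equal when defined *)
  add_assoc : forall a b c,
    obind (add a b) (fun ab => add ab c) = obind (add b c) (fun bc => add a bc);
  add_0r : forall a, add a zero = Some a;
  mul_assoc : forall a b c, mul a (mul b c) = mul (mul a b) c;
  mul_1l : forall a, mul one a = a;
  mul_1r : forall a, mul a one = a;
  mul_distr_l : forall a b c s, add b c = Some s ->
    add (mul a b) (mul a c) = Some (mul a s);
  mul_distr_r : forall a b c s, add b c = Some s ->
    add (mul b a) (mul c a) = Some (mul s a);
  mul_0l : forall a, mul zero a = zero;
  mul_0r : forall a, mul a zero = zero
}.

Definition nle : U -> U -> Prop := nat_le addR.

Definition naturally_ordered : Prop := partial_order nle.

Definition has_top : Prop := exists t, forall u, nle u t.

Definition scott_continuous_sr : Prop :=
  (forall D : U -> Prop, directed nle D -> exists s, is_sup nle D s) /\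
  (forall (D : U -> Prop) s y t, directed nle D -> is_sup nle D s ->
     add s y = Some t ->
     is_sup nle (fun z => exists x, D x /\ add x y = Some z) t) /\
  (forall (D : U -> Prop) s y, directed nle D -> is_sup nle D s ->
     is_sup nle (fun z => exists x, D x /\ z = mul x y) (mul s y)) /\
  (forall (D : U -> Prop) s y, directed nle D -> is_sup nle D s ->
     is_sup nle (fun z => exists x, D x /\ z = mul y x) (mul y s)).

Variable Y : Type.

Definition support (m : Y -> U) : Type := { y : Y | m y <> zero }.

Definition countable_support (m : Y -> U) : Prop :=
  exists e : nat -> option Y, forall y, m y <> zero -> exists n, e n = Some y.

Definition inW (m : Y -> U) : Prop :=
  countable_support m /\
  exists M, is_family_sum addR zero (fun p : support m => m (proj1_sig p)) M.

Definition addW (m1 m2 m : Y -> U) : Prop :=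
  inW m1 /\ inW m2 /\ inW m /\ forall y, add (m1 y) (m2 y) = Some (m y).

Definition zeroW : Y -> U := fun _ => zero.

Definition leW (m1 m2 : Y -> U) : Prop := exists m, addW m1 m m2.

Definition is_family_sumW (I : Type) (u : I -> Y -> U) (s : Y -> U) : Prop :=
  is_family_sum addW zeroW u s.
End PSR.

From Stdlib Require Import List Permutation ClassicalEpsilon ProofIrrelevance
  FunctionalExtensionality PropExtensionality FinFun.
Import ListNotations.
Set Implicit Arguments.

(* Sums and directed suprema in W(Y) are computed pointwise, so everything
   reduces to commuting a sum with a directed supremum in the semiring.  A sum
   is the supremum of its finite partial sums, and a finite sum of directed
   suprema is the directed supremum of the finite sums: for two summands,
   Scott continuity of addition in each argument gives
   sup p + sup q = sup_x sup_x' (p x + q x'), and directedness collapses the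
   double supremum to the diagonal.  Exchanging the two suprema then gives the
   claim. *)

Section Orders.
Variables (A B : Type) (leA : A -> A -> Prop) (leB : B -> B -> Prop).

Lemma directed_image (D : A -> Prop) (p : A -> B) :
  directed leA D ->
  (forall x x', D x -> D x' -> leA x x' -> leB (p x) (p x')) ->
  directed leB (fun u => exists x, D x /\ u = p x).
Proof.
  intros [[x0 Dx0] D_dir] p_mono. split; [eauto|].
  intros u1 u2 [x1 [D1 ->]] [x2 [D2 ->]].
  destruct (D_dir x1 x2 D1 D2) as [x [Dx [L1 L2]]].
  exists (p x). split; [eauto | split; auto].
Qed.

Lemma scott_continuous_monotone (p : A -> B) :
  (forall x, leA x x) ->
  (forall D s, directed leA D -> is_sup leA D s ->
     is_sup leB (fun u => exists x, D x /\ u = p x) (p s)) ->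
  forall x x', leA x x' -> leB (p x) (p x').
Proof.
  intros leA_refl p_sup x x' Lx.
  assert (pair_sup : is_sup leA (fun z => z = x \/ z = x') x').
  { split; [intros z [-> | ->]; auto | intros b Hb; apply Hb; auto]. }
  assert (pair_dir : directed leA (fun z => z = x \/ z = x')).
  { split; [eauto|]. intros a b Ha Hb. exists x'.
    split; [auto | split; apply pair_sup; auto]. }
  apply (proj1 (p_sup _ _ pair_dir pair_sup)). eauto.
Qed.
End Orders.

Definition finite_sums (A : Type) (addR : A -> A -> A -> Prop) (zero : A)
  (J : Type) (u : J -> A) (t : A) : Prop :=
  exists l, NoDup l /\ fsumR addR zero (map u l) t.

Definition pointwise (Y A : Type) (S : (Y -> A) -> Prop) (y : Y) (a : A) : Prop :=
  exists h, S h /\ a = h y.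

Lemma pointwise_image (X Y A : Type) (D : X -> Prop) (h : X -> Y -> A) (y : Y) :
  pointwise (fun n => exists x, D x /\ n = h x) y = (fun a => exists x, D x /\ a = h x y).
Proof.
  apply functional_extensionality. intros a. apply propositional_extensionality.
  split.
  - intros [n [[x [Dx ->]] ->]]. eauto.
  - intros [x [Dx ->]]. exists (h x). eauto.
Qed.

Section NaturalOrder.
Variables (U : Type) (add : U -> U -> option U) (zero : U).
Hypothesis addC : forall a b, add a b = add b a.
Hypothesis addA : forall a b c,
  obind (add a b) (fun ab => add ab c) = obind (add b c) (fun bc => add a bc).
Hypothesis addr0 : forall a, add a zero = Some a.

Notation le := (nle add).
Notation fsum := (fsumR (addR add) zero).

Lemma add0r a : add zero a = Some a.
Proof. rewrite addC. apply addr0. Qed.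

Lemma addA_l a b c ab abc : add a b = Some ab -> add ab c = Some abc ->
  exists bc, add b c = Some bc /\ add a bc = Some abc.
Proof.
  intros Eab Eabc. pose proof (addA a b c) as E.
  rewrite Eab in E. simpl in E. rewrite Eabc in E.
  destruct (add b c) as [bc|]; simpl in E; [eauto | discriminate].
Qed.

Lemma addA_r a b c bc abc : add b c = Some bc -> add a bc = Some abc ->
  exists ab, add a b = Some ab /\ add ab c = Some abc.
Proof.
  intros Ebc Eabc. pose proof (addA a b c) as E.
  rewrite Ebc in E. simpl in E. rewrite Eabc in E.
  destruct (add a b) as [ab|]; simpl in E; [eauto | discriminate].
Qed.

Lemma le_refl a : le a a.
Proof. exists zero. apply addr0. Qed.

Lemma le_trans a b c : le a b -> le b c -> le a c.
Proof.
  intros [w Ew] [w' Ew']. destruct (addA_l Ew Ew') as [ww' [_ E]].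
  exists ww'. exact E.
Qed.

Lemma le0x a : le zero a.
Proof. exists a. apply add0r. Qed.

Lemma le_addr a b c : add a b = Some c -> le b c.
Proof. intros E. exists a. unfold addR. rewrite addC. exact E. Qed.

Lemma le_add_mono a' a b' b c : le a' a -> le b' b -> add a b = Some c ->
  exists c', add a' b' = Some c' /\ le c' c.
Proof.
  assert (mono_l : forall a' a b c, le a' a -> add a b = Some c ->
            exists c', add a' b = Some c' /\ le c' c).
  { intros x' x y z [r Er] E. unfold addR in Er. rewrite addC in Er.
    destruct (addA_l Er E) as [t [Et Ez]].
    exists t. split; [exact Et | exact (le_addr Ez)]. }
  intros La Lb E. destruct (mono_l _ _ _ _ La E) as [c1 [E1 L1]].
  rewrite addC in E1. destruct (mono_l _ _ _ _ Lb E1) as [c2 [E2 L2]].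
  exists c2. rewrite addC. split; [exact E2 | exact (le_trans L2 L1)].
Qed.

Lemma fsum_unique l t t' : fsum l t -> fsum l t' -> t = t'.
Proof.
  intros F. revert t'. induction F as [|a l t r F IH E]; intros t' F'.
  - inversion F'. reflexivity.
  - inversion F' as [|a' l' t2 r' F2 E2]; subst.
    rewrite (IH _ F2) in E. unfold addR in *. congruence.
Qed.

Lemma fsum_perm l l' t : Permutation l l' -> fsum l t -> fsum l' t.
Proof.
  intros P. revert t. induction P as [| |a b l|]; intros t F; auto.
  - inversion F; subst. econstructor; eauto.
  - inversion F as [|a0 l0 t0 r0 F0 E0]; subst.
    inversion F0 as [|a1 l1 t1 r1 F1 E1]; subst. unfold addR in *.
    destruct (addA_r E1 E0) as [ba [Eba Et]].
    rewrite addC in Eba. destruct (addA_l Eba Et) as [at1 [Eat1 Et']].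
    econstructor; [econstructor; eauto | exact Et'].
Qed.

Lemma fsum_le_mono (J : Type) (u v : J -> U) l t :
  (forall j, le (v j) (u j)) -> fsum (map u l) t ->
  exists t', fsum (map v l) t' /\ le t' t.
Proof.
  intros Lvu. revert t. induction l as [|j l IH]; intros t F; simpl in *.
  - exists t. split; [exact F | apply le_refl].
  - inversion F as [|a l' t0 r F0 E]; subst.
    destruct (IH _ F0) as [t' [F' L']].
    destruct (le_add_mono (Lvu j) L' E) as [c [Ec Lc]].
    exists c. split; [econstructor; eauto | exact Lc].
Qed.

Lemma fsum_incl (J : Type) (u : J -> U) l1 l t :
  NoDup l1 -> incl l1 l -> fsum (map u l) t ->
  exists t1, fsum (map u l1) t1 /\ le t1 t.
Proof.
  intros N1. revert l t. induction N1 as [|j l1 Hj N1 IH]; intros l t Hincl F.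
  - exists zero. split; [constructor | apply le0x].
  - destruct (in_split _ _ (Hincl j (or_introl eq_refl))) as [l' [l'' ->]].
    apply (fsum_perm (Permutation_map u (Permutation_sym (Permutation_middle l' l'' j))))
      in F.
    inversion F as [|a l0 t0 r F0 E]; subst.
    destruct (IH (l' ++ l'') t0) as [t1 [F1 L1]]; [|exact F0|].
    { intros k Hk. assert (Hk' : In k (l' ++ j :: l'')) by (apply Hincl; right; exact Hk).
      apply in_app_or in Hk'. apply in_or_app.
      destruct Hk' as [Hk' | [-> | Hk']]; auto. contradiction. }
    destruct (le_add_mono (le_refl (u j)) L1 E) as [c [Ec Lc]].
    exists c. split; [econstructor; eauto | exact Lc].
Qed.

Lemma finite_sums_directed (J : Type) (u : J -> U) :
  (forall l, NoDup l -> exists t, fsum (map u l) t) ->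
  directed le (finite_sums (addR add) zero u).
Proof.
  intros sums_exist. split.
  - exists zero, []. split; constructor.
  - intros t1 t2 [l1 [N1 F1]] [l2 [N2 F2]].
    set (l := nodup (fun a b => excluded_middle_informative (a = b)) (l1 ++ l2)).
    assert (Nl : NoDup l) by apply NoDup_nodup.
    destruct (sums_exist l Nl) as [t F].
    assert (below : forall l0 t0, NoDup l0 -> incl l0 (l1 ++ l2) ->
              fsum (map u l0) t0 -> le t0 t).
    { intros l0 t0 N0 Hincl F0.
      assert (Hincl' : incl l0 l) by (intros a Ha; apply nodup_In; auto).
      destruct (fsum_incl u N0 Hincl' F) as [t0' [F0' L0]].
      rewrite (fsum_unique F0 F0'). exact L0. }
    exists t. split; [exists l; auto|].
    split; [apply below with l1 | apply below with l2];
      auto using incl_appl, incl_appr, incl_refl.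
Qed.

Section ScottContinuity.
Hypothesis sup_exists : forall S, directed le S -> exists s, is_sup le S s.
Hypothesis add_sup : forall S s y t, directed le S -> is_sup le S s ->
  add s y = Some t -> is_sup le (fun z => exists x, S x /\ add x y = Some z) t.

Lemma family_sum_exists (J : Type) (u : J -> U) :
  (forall l, NoDup l -> exists t, fsum (map u l) t) ->
  exists s, is_family_sum (addR add) zero u s.
Proof.
  intros sums_exist. destruct (sup_exists (finite_sums_directed u sums_exist)) as [s Hs].
  exists s. split; assumption.
Qed.

Section DirectedFamilies.
Variables (X : Type) (leX : X -> X -> Prop) (D : X -> Prop).
Hypothesis D_dir : directed leX D.

Definition monotone_on (p : X -> U) : Prop :=
  forall x x', D x -> D x' -> leX x x' -> le (p x) (p x').

Lemma add_sup_directed (p q r : X -> U) P Q R :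
  monotone_on p -> monotone_on q ->
  is_sup le (fun u => exists x, D x /\ u = p x) P ->
  is_sup le (fun u => exists x, D x /\ u = q x) Q ->
  add P Q = Some R ->
  (forall x, D x -> add (p x) (q x) = Some (r x)) ->
  is_sup le (fun u => exists x, D x /\ u = r x) R.
Proof.
  intros p_mono q_mono P_sup Q_sup E Er. split.
  - intros u [x [Dx ->]].
    assert (Lp : le (p x) P) by (apply P_sup; eauto).
    assert (Lq : le (q x) Q) by (apply Q_sup; eauto).
    destruct (le_add_mono Lp Lq E) as [c [Ec Lc]].
    rewrite (Er x Dx) in Ec. injection Ec as ->. exact Lc.
  - intros B B_ub.
    (* R = sup_x (p x + Q) and p x + Q = sup_x' (q x' + p x), so it suffices
       to bound p x + q x' by r x'' for a common upper bound x'' in D. *)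
    apply (add_sup (directed_image _ _ D_dir p_mono) P_sup E).
    intros z [v [[x [Dx ->]] Ez]]. rewrite addC in Ez.
    apply (add_sup (directed_image _ _ D_dir q_mono) Q_sup Ez).
    intros z' [w [[x' [Dx' ->]] Ez']].
    destruct (proj2 D_dir x x' Dx Dx') as [x'' [Dx'' [Lx Lx']]].
    destruct (le_add_mono (p_mono _ _ Dx Dx'' Lx) (q_mono _ _ Dx' Dx'' Lx') (Er x'' Dx''))
      as [c [Ec Lc]].
    rewrite addC, Ez' in Ec. injection Ec as ->.
    apply le_trans with (r x''); [exact Lc | apply B_ub; eauto].
Qed.

Variables (I : Type) (a : I -> X -> U) (A : I -> U).
Hypothesis a_mono : forall i, monotone_on (a i).
Hypothesis a_sup : forall i, is_sup le (fun u => exists x, D x /\ u = a i x) (A i).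

Lemma fsum_sup_directed l t : fsum (map A l) t ->
  exists s : X -> U, (forall x, D x -> fsum (map (fun i => a i x) l) (s x)) /\
    is_sup le (fun u => exists x, D x /\ u = s x) t.
Proof.
  revert t. induction l as [|i l IH]; intros t F; simpl in F.
  - assert (t = zero) as -> by (inversion F; reflexivity).
    exists (fun _ => zero). split; [constructor|].
    split; [intros u [x [_ ->]]; apply le_refl | intros b _; apply le0x].
  - inversion F as [|a0 l0 T t0 FT E]; subst. unfold addR in E.
    destruct (IH T FT) as [s [Fs s_sup]].
    assert (s_mono : monotone_on s).
    { intros x x' Dx Dx' Lx.
      destruct (fsum_le_mono (fun i => a i x') (fun i => a i x) l
                  (fun j => a_mono j Dx Dx' Lx) (Fs x' Dx')) as [u [Fu Lu]].
      rewrite (fsum_unique (Fs x Dx) Fu). exact Lu. }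
    set (r x := match add (a i x) (s x) with Some z => z | None => zero end).
    assert (Er : forall x, D x -> add (a i x) (s x) = Some (r x)).
    { intros x Dx.
      assert (La : le (a i x) (A i)) by (apply a_sup; eauto).
      assert (Ls : le (s x) T) by (apply s_sup; eauto).
      destruct (le_add_mono La Ls E) as [c [Ec _]].
      unfold r. rewrite Ec. reflexivity. }
    exists r. split.
    + intros x Dx. simpl. econstructor; [exact (Fs x Dx) | exact (Er x Dx)].
    + exact (add_sup_directed r (a_mono i) s_mono (a_sup i) s_sup E Er).
Qed.

Lemma family_sum_sup_directed M : is_family_sum (addR add) zero A M ->
  exists G : X -> U,
    (forall x, D x -> is_family_sum (addR add) zero (fun i => a i x) (G x)) /\
    is_sup le (fun u => exists x, D x /\ u = G x) M.
Proof.
  intros [A_sums M_sup].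
  assert (sums_below : forall x, D x -> forall l, NoDup l ->
            exists u, fsum (map (fun i => a i x) l) u /\ le u M).
  { intros x Dx l N. destruct (A_sums l N) as [t F].
    assert (Lt : le t M) by (apply M_sup; exists l; auto).
    assert (La : forall i, le (a i x) (A i)) by (intros i; apply a_sup; eauto).
    destruct (fsum_le_mono A (fun i => a i x) l La F) as [u [Fu Lu]].
    exists u. split; [exact Fu | exact (le_trans Lu Lt)]. }
  destruct (choice (fun x s => D x -> is_family_sum (addR add) zero (fun i => a i x) s))
    as [G HG].
  { intros x. destruct (classic (D x)) as [Dx | nDx]; [|exists zero; contradiction].
    destruct (family_sum_exists (fun i => a i x)) as [s Hs]; [|exists s; auto].
    intros l N. destruct (sums_below x Dx l N) as [u [Fu _]]. eauto. }
  exists G. split; [exact HG|]. split.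
  - intros u [x [Dx ->]]. apply (proj2 (proj2 (HG x Dx))).
    intros t [l [N F]]. destruct (sums_below x Dx l N) as [u [Fu Lu]].
    rewrite (fsum_unique F Fu). exact Lu.
  - intros B B_ub. apply (proj2 M_sup). intros t [l [N F]].
    destruct (fsum_sup_directed _ F) as [s [Fs s_sup]].
    apply (proj2 s_sup). intros u [x [Dx ->]].
    apply le_trans with (G x); [|apply B_ub; eauto].
    apply (proj1 (proj2 (HG x Dx))). exists l. auto.
Qed.
End DirectedFamilies.

Section Weights.
Hypothesis le_anti : forall a b, le a b -> le b a -> a = b.
Variable Y : Type.

Notation W := (@inW U add zero Y).
Notation leW := (@leW U add zero Y).
Notation addW := (@addW U add zero Y).
Notation zeroW := (@zeroW U zero Y).
Notation fsumW := (fsumR addW zeroW).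

Lemma inW_le (m1 m2 : Y -> U) : W m2 -> (forall y, le (m1 y) (m2 y)) -> W m1.
Proof.
  intros [[e He] [M [M_sums _]]] L12.
  assert (supp : forall y, m1 y <> zero -> m2 y <> zero).
  { intros y H1 H2. apply H1, le_anti; [rewrite <- H2; apply L12 | apply le0x]. }
  split; [exists e; auto|].
  apply family_sum_exists. intros l N.
  set (iota (p : support zero m1) :=
         exist (fun y => m2 y <> zero) (proj1_sig p) (supp _ (proj2_sig p))).
  assert (iota_inj : Injective iota).
  { intros [y1 H1] [y2 H2] E. apply (f_equal (@proj1_sig _ _)) in E. simpl in E.
    subst y2. f_equal. apply proof_irrelevance. }
  destruct (M_sums _ (Injective_map_NoDup iota_inj N)) as [t F].
  rewrite map_map in F.
  destruct (fsum_le_mono _ (fun p => m1 (proj1_sig p)) l (fun p => L12 (proj1_sig p)) F)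
    as [t' [F' _]].
  eauto.
Qed.

Lemma leW_pointwise c1 c2 : leW c1 c2 -> W c1 /\ W c2 /\ forall y, le (c1 y) (c2 y).
Proof.
  intros [w [W1 [_ [W2 E]]]]. split; [exact W1 | split; [exact W2|]].
  intros y. exists (w y). apply E.
Qed.

Lemma leW_of_pointwise c1 c2 : W c2 -> (forall y, le (c1 y) (c2 y)) -> leW c1 c2.
Proof.
  intros W2 L12. destruct (choice _ L12) as [w Ew].
  exists w. split; [apply inW_le with c2; auto|].
  split; [apply inW_le with c2; auto; intros y; exact (le_addr (Ew y))|].
  split; auto.
Qed.

Lemma is_supW_of_pointwise (S : (Y -> U) -> Prop) c :
  (exists h, S h) -> W c -> (forall y, is_sup le (pointwise S y) (c y)) ->
  is_sup leW S c.
Proof.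
  intros [h0 Sh0] Wc c_sup. split.
  - intros h Sh. apply leW_of_pointwise; [exact Wc|].
    intros y. apply (c_sup y). exists h; auto.
  - intros b b_ub. destruct (leW_pointwise (b_ub h0 Sh0)) as [_ [Wb _]].
    apply leW_of_pointwise; [exact Wb|]. intros y. apply (c_sup y).
    intros u [h [Sh ->]]. apply (leW_pointwise (b_ub h Sh)).
Qed.

Lemma is_supW_pointwise (S : (Y -> U) -> Prop) c :
  is_sup leW S c -> (forall y, directed le (pointwise S y)) ->
  forall y, is_sup le (pointwise S y) (c y).
Proof.
  intros [c_ub c_least] S_dir y0.
  destruct (choice _ (fun y => sup_exists (S_dir y))) as [c' c'_sup].
  destruct (proj1 (S_dir y0)) as [u0 [h0 [Sh0 _]]].
  destruct (leW_pointwise (c_ub h0 Sh0)) as [_ [Wc _]].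
  assert (c'_le_c : forall y, le (c' y) (c y)).
  { intros y. apply (c'_sup y). intros u [h [Sh ->]]. apply (leW_pointwise (c_ub h Sh)). }
  assert (c_le_c' : leW c c').
  { apply c_least. intros h Sh. apply leW_of_pointwise; [apply inW_le with c; auto|].
    intros y. apply (c'_sup y). exists h; auto. }
  replace (c y0) with (c' y0); [apply c'_sup|].
  apply le_anti; [apply c'_le_c | apply (leW_pointwise c_le_c')].
Qed.

Lemma fsumW_pointwise ls T : fsumW ls T -> forall y, fsum (map (fun h => h y) ls) (T y).
Proof.
  intros F y. induction F as [|h ls T' T F IH [_ [_ [_ E]]]]; simpl.
  - constructor.
  - econstructor; [exact IH | apply E].
Qed.

Lemma fsumW_of_pointwise ls T : (forall h, In h ls -> W h) -> W T ->
  (forall y, fsum (map (fun h => h y) ls) (T y)) -> fsumW ls T.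
Proof.
  revert T. induction ls as [|h ls IH]; intros T ls_W WT FT; simpl in FT.
  - replace T with zeroW; [constructor|].
    apply functional_extensionality. intros y. specialize (FT y). inversion FT. reflexivity.
  - assert (split_T : forall y, exists t,
              fsum (map (fun h => h y) ls) t /\ add (h y) t = Some (T y)).
    { intros y. specialize (FT y). inversion FT; eauto. }
    destruct (choice _ split_T) as [T' HT'].
    assert (WT' : W T').
    { apply inW_le with T; [exact WT|]. intros y. exact (le_addr (proj2 (HT' y))). }
    econstructor.
    + apply IH; [intros h' Hh'; apply ls_W; right; exact Hh' | exact WT' | apply HT'].
    + split; [apply ls_W; left; reflexivity|]. split; [exact WT'|]. split; [exact WT|].
      apply HT'.
Qed.

Lemma pointwise_finite_sumsW (J : Type) (u : J -> Y -> U) y :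
  (forall l, NoDup l -> exists T, fsumW (map u l) T) ->
  pointwise (finite_sums addW zeroW u) y = finite_sums (addR add) zero (fun j => u j y).
Proof.
  intros sumsW_exist.
  apply functional_extensionality. intros t. apply propositional_extensionality. split.
  - intros [T [[l [N F]] ->]]. exists l. split; [exact N|].
    pose proof (fsumW_pointwise F y) as G. rewrite map_map in G. exact G.
  - intros [l [N F]]. destruct (sumsW_exist l N) as [T FT].
    exists T. split; [exists l; auto|].
    pose proof (fsumW_pointwise FT y) as G. rewrite map_map in G. exact (fsum_unique F G).
Qed.

Lemma family_sumW_pointwise (J : Type) (u : J -> Y -> U) s :
  is_family_sumW add zero u s ->
  W s /\ forall y, is_family_sum (addR add) zero (fun j => u j y) (s y).
Proof.
  intros [sumsW_exist s_sup].
  assert (sums_exist : forall y l, NoDup l -> exists t, fsum (map (fun j => u j y) l) t).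
  { intros y l N. destruct (sumsW_exist l N) as [T F]. exists (T y).
    pose proof (fsumW_pointwise F y) as G. rewrite map_map in G. exact G. }
  split.
  - assert (zeroW_le_s : leW zeroW s) by (apply s_sup; exists []; split; constructor).
    apply (leW_pointwise zeroW_le_s).
  - intros y. split; [apply sums_exist|].
    assert (S_dir : forall y', directed le (pointwise (finite_sums addW zeroW u) y')).
    { intros y'. rewrite (pointwise_finite_sumsW u y' sumsW_exist).
      apply finite_sums_directed, sums_exist. }
    pose proof (is_supW_pointwise (S := finite_sums addW zeroW u) s_sup S_dir y) as s_sup_y.
    rewrite (pointwise_finite_sumsW u y sumsW_exist) in s_sup_y. exact s_sup_y.
Qed.

Lemma family_sumW_of_pointwise (J : Type) (u : J -> Y -> U) s :
  (forall j, W (u j)) -> W s ->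
  (forall y, is_family_sum (addR add) zero (fun j => u j y) (s y)) ->
  is_family_sumW add zero u s.
Proof.
  intros u_W Ws s_sum.
  assert (sumsW_exist : forall l, NoDup l -> exists T, fsumW (map u l) T).
  { intros l N. destruct (choice _ (fun y => proj1 (s_sum y) l N)) as [T FT].
    exists T. apply fsumW_of_pointwise.
    - intros h Hh. apply in_map_iff in Hh. destruct Hh as [j [<- _]]. apply u_W.
    - apply inW_le with s; [exact Ws|]. intros y. apply (proj2 (s_sum y)). exists l; auto.
    - intros y. rewrite map_map. apply FT. }
  split; [exact sumsW_exist|].
  apply is_supW_of_pointwise with (S := finite_sums addW zeroW u); [|exact Ws|].
  - exists zeroW, []. split; constructor.
  - intros y. rewrite (pointwise_finite_sumsW u y sumsW_exist). apply s_sum.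
Qed.

Theorem family_sumW_directed_sup (X : Type) (leX : X -> X -> Prop)
  (leX_refl : forall x, leX x x) (I : Type) (f : I -> X -> Y -> U)
  (f_W : forall i x, W (f i x))
  (f_sup : forall i D s, directed leX D -> is_sup leX D s ->
     is_sup leW (fun n => exists x, D x /\ n = f i x) (f i s))
  (D : X -> Prop) (sD : X) (D_dir : directed leX D) (sD_sup : is_sup leX D sD)
  (m : Y -> U) (m_sum : is_family_sumW add zero (fun i => f i sD) m) :
  exists g : X -> Y -> U,
    (forall x, D x -> is_family_sumW add zero (fun i => f i x) (g x)) /\
    is_sup leW (fun n => exists x, D x /\ n = g x) m.
Proof.
  destruct (family_sumW_pointwise m_sum) as [Wm m_sums].
  assert (f_mono : forall i y, monotone_on leX D (fun x => f i x y)).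
  { intros i y x x' _ _ Lx.
    apply (leW_pointwise (scott_continuous_monotone (f i) leX_refl (f_sup i) _ _ Lx)). }
  assert (f_sup_y : forall i y, is_sup le (fun u => exists x, D x /\ u = f i x y) (f i sD y)).
  { intros i y. rewrite <- pointwise_image.
    apply (is_supW_pointwise (f_sup i D sD D_dir sD_sup)).
    intros y'. rewrite pointwise_image. exact (directed_image _ _ D_dir (f_mono i y')). }
  destruct (choice _ (fun y => family_sum_sup_directed D_dir _ (fun i => f_mono i y)
                                 (fun i => f_sup_y i y) (m_sums y))) as [G HG].
  set (g x y := G y x).
  assert (g_W : forall x, D x -> W (g x)).
  { intros x Dx. apply inW_le with m; [exact Wm|].
    intros y. apply (proj1 (proj2 (HG y))). eauto. }
  exists g. split.
  - intros x Dx. apply family_sumW_of_pointwise; [intros i; apply f_W | exact (g_W x Dx)|].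
    intros y. exact (proj1 (HG y) x Dx).
  - destruct D_dir as [[x0 Dx0] _]. apply is_supW_of_pointwise; [eauto | exact Wm|].
    intros y. rewrite pointwise_image. exact (proj2 (HG y)).
Qed.
End Weights.
End ScottContinuity.
End NaturalOrder.

Theorem lemmaA1
  (U : Type) (add : U -> U -> option U) (mul : U -> U -> U) (zero one : U)
  (HA : is_partial_semiring add mul zero one)
  (Hnat : naturally_ordered add)
  (Htop : has_top add)
  (Hscott : scott_continuous_sr add mul)
  (X : Type) (leX : X -> X -> Prop) (HX : partial_order leX)
  (Y : Type) (I : Type) (f : I -> X -> Y -> U)
  (HfW : forall i x, inW add zero (f i x))
  (Hfc : forall i (D : X -> Prop) s, directed leX D -> is_sup leX D s ->
           is_sup (@leW U add zero Y) (fun m => exists x, D x /\ m = f i x) (f i s))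
  (D : X -> Prop) (sD : X) (HD : directed leX D) (HsD : is_sup leX D sD)
  (m : Y -> U) (Hm : @is_family_sumW U add zero Y I (fun i => f i sD) m) :
  exists g : X -> Y -> U,
    (forall x, D x -> @is_family_sumW U add zero Y I (fun i => f i x) (g x)) /\
    is_sup (@leW U add zero Y) (fun n => exists x, D x /\ n = g x) m.
Proof.
  destruct HA as [addC addA addr0 _ _ _ _ _ _ _].
  destruct Hnat as (_ & _ & le_anti).
  destruct Hscott as (sup_exists & add_sup & _).
  destruct HX as (leX_refl & _).
  exact (family_sumW_directed_sup addC addA addr0 sup_exists add_sup le_anti
           leX_refl f HfW Hfc HD HsD Hm).
Qed.
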